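(* There is an absolute constant $\beta>0$ such that for every integer $k>5$ there exists a $k$-terminal network $(G,c)$ with $G$ planar such that every mimicking network $(G',c')$ of $(G,c)$ satisfies $|E(G')|\ge \beta k^2$.
   Context: A network $(G,c)$ is an undirected graph $G$ with edge costs $c:E(G)\to\mathbb{R}^+$. A $k$-terminal network additionally has a set $Q=\{q_1,\dots,q_k\}\subseteq V(G)$ of distinguished vertices called terminals. For $S\subset Q$ with $S\neq\emptyset,Q$, write $\bar S=Q\setminus S$; a cut $(W,V(G)\setminus W)$ is $S$-separating if $W\cap Q\in\{S,\bar S\}$. The cost of a cut is the total cost of the edges with exactly one endpoint in $W$ (the cutset). $\mathrm{mincut}_{G,c}(S,\bar S)$ denotes the minimum cost of an $S$-separating cut. A mimicking network of a $k$-terminal network $(G,c)$ is a $k$-terminal network $(G',c')$ with the same terminal set $Q$ such that $\mathrm{mincut}_{G',c'}(S,\bar S)=\mathrm{mincut}_{G,c}(S,\bar S)$ for every $S\subset Q$ with $S\neq\emptyset,Q$. *)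

From Stdlib Require Import Reals List.
Import ListNotations.
Open Scope R_scope.

(* A network: vertices are 0 .. nverts-1, an undirected simple edge list
   (each edge stored once as an ordered pair), and a cost function on edges. *)
Record network := mkNet {
  nverts : nat;
  edges : list (nat * nat);
  cost : nat * nat -> R
}.

Definition unord (e : nat * nat) : nat * nat :=
  (Nat.min (fst e) (snd e), Nat.max (fst e) (snd e)).

Definition edge_ok (N : network) (e : nat * nat) : Prop :=
  (fst e < nverts N)%nat /\ (snd e < nverts N)%nat /\ fst e <> snd e
  /\ 0 < cost N e.

Definition wf_network (N : network) : Prop :=
  Forall (edge_ok N) (edges N) /\ NoDup (map unord (edges N)).

Definition terminals_ok (N : network) (Q : list nat) (k : nat) : Prop :=
  length Q = k /\ NoDup Q /\ Forall (fun q => (q < nverts N)%nat) Q.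

(* S subset of Q given by indicator on indices 0..k-1; S <> empty, S <> Q *)
Definition proper_subset (k : nat) (S : nat -> bool) : Prop :=
  (exists i, (i < k)%nat /\ S i = true) /\ (exists j, (j < k)%nat /\ S j = false).

Definition separating (Q : list nat) (S : nat -> bool) (W : nat -> bool) : Prop :=
  (forall i, (i < length Q)%nat -> W (nth i Q 0%nat) = S i) \/
  (forall i, (i < length Q)%nat -> W (nth i Q 0%nat) = negb (S i)).

Definition cut_cost (N : network) (W : nat -> bool) : R :=
  fold_right Rplus 0
    (map (fun e => if Bool.eqb (W (fst e)) (W (snd e)) then 0 else cost N e)
         (edges N)).

Definition is_mincut (N : network) (Q : list nat) (S : nat -> bool) (m : R) : Prop :=
  (exists W, separating Q S W /\ cut_cost N W = m) /\
  (forall W, separating Q S W -> m <= cut_cost N W).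

Definition mimicking (N' N : network) (Q : list nat) : Prop :=
  wf_network N' /\ terminals_ok N' Q (length Q) /\
  forall S, proper_subset (length Q) S ->
    forall m, is_mincut N Q S m <-> is_mincut N' Q S m.

(* Planarity: an embedding in R^2 with vertices as distinct points and edges
   as Jordan arcs (continuous injective images of [0,1]) joining their
   endpoints, whose interiors avoid all vertices and which meet only at
   endpoints. *)
Definition cont_on01 (g : R -> R * R) : Prop :=
  forall t, 0 <= t <= 1 -> forall eps, 0 < eps -> exists delta, 0 < delta /\
    forall s, 0 <= s <= 1 -> Rabs (s - t) < delta ->
      Rabs (fst (g s) - fst (g t)) < eps /\ Rabs (snd (g s) - snd (g t)) < eps.

Definition inj_on01 (g : R -> R * R) : Prop :=
  forall s t, 0 <= s <= 1 -> 0 <= t <= 1 -> g s = g t -> s = t.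

Definition planar (N : network) : Prop :=
  exists (p : nat -> R * R) (gamma : nat -> R -> R * R),
    (forall u v, (u < nverts N)%nat -> (v < nverts N)%nat -> p u = p v -> u = v) /\
    (forall i, (i < length (edges N))%nat ->
       let e := nth i (edges N) (0%nat, 0%nat) in
       cont_on01 (gamma i) /\ inj_on01 (gamma i) /\
       gamma i 0 = p (fst e) /\ gamma i 1 = p (snd e) /\
       (forall t w, 0 < t < 1 -> (w < nverts N)%nat -> gamma i t <> p w)) /\
    (forall i j s t, (i < length (edges N))%nat -> (j < length (edges N))%nat ->
       i <> j -> 0 <= s <= 1 -> 0 <= t <= 1 -> gamma i s = gamma j t ->
       (s = 0 \/ s = 1) /\ (t = 0 \/ t = 1)).

(* Construction (for n = floor(k/2)): a planar grid network with terminals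
   a_0..a_(n-1), b_0..b_(n-1) (plus one isolated terminal if k is odd).  Each a_x
   sits on a "spine" A_x of very expensive edges, each b_y on a spine B_y, and
   for every pair (x, y) an L-shaped path of cost w(x,y) = ln p_(xn+y) joins
   A_x to B_y; the L-paths cross only at grid vertices, so the network is a set
   of distinct unit grid segments and hence planar.  For the terminal subset
   S_ij = {a_x | i <= x} u {b_y | j <= y}, the minimum cut never cuts a spine,
   so it costs exactly the weight of the L-paths (x, y) with [i <= x] <> [j <= y].
   The mixed second difference of these min-cut values in (i, j) is -2 w(i,j).

   Lower bound: in any mimicking network N' every min-cut value is an integer
   combination of the |E(N')| edge costs, so the (n-2)^2 numbers -2 ln p_t, which
   are independent over the integers (unique factorisation), lie in the integer
   span of |E(N')| reals; a Gaussian-elimination argument gives (n-2)^2 <= |E(N')|,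
   and (n-2)^2 >= k^2/100. *)
From Stdlib Require Import Reals List Lia Lra ZArith Znumtheory Classical ClassicalEpsilon.
Open Scope R_scope.

Fixpoint isum (n : nat) (f : nat -> R) : R :=
  match n with O => 0 | S n' => isum n' f + f n' end.

Lemma isum_ext n f g : (forall t, (t < n)%nat -> f t = g t) -> isum n f = isum n g.
Proof.
  induction n as [|n IH]; simpl; intros H; [reflexivity|].
  rewrite IH by (intros; apply H; lia). rewrite H by lia. reflexivity.
Qed.

Lemma isum_plus n f g : isum n (fun t => f t + g t) = isum n f + isum n g.
Proof. induction n; simpl; [lra|]. rewrite IHn. lra. Qed.

Lemma isum_scal n c f : isum n (fun t => c * f t) = c * isum n f.
Proof. induction n; simpl; [lra|]. rewrite IHn. lra. Qed.

Lemma isum_zero n : isum n (fun _ => 0) = 0.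
Proof. induction n; simpl; [lra|]. rewrite IHn. lra. Qed.

Lemma isum_shift n g : isum (S n) g = g 0%nat + isum n (fun t => g (S t)).
Proof. induction n; simpl; [lra|]. simpl in IHn. rewrite IHn. lra. Qed.

Definition skip (t0 s : nat) : nat := if Nat.ltb s t0 then s else S s.
Definition unskip (t0 s : nat) : nat := if Nat.ltb s t0 then s else pred s.

Lemma skip_neq t0 s : skip t0 s <> t0.
Proof. unfold skip. destruct (Nat.ltb_spec s t0); lia. Qed.

Lemma skip_lt t0 s d : (s < d)%nat -> (skip t0 s < S d)%nat.
Proof. unfold skip. destruct (Nat.ltb_spec s t0); lia. Qed.

Lemma unskip_skip t0 s : unskip t0 (skip t0 s) = s.
Proof.
  unfold skip, unskip. destruct (Nat.ltb_spec s t0).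
  - destruct (Nat.ltb_spec s t0); lia.
  - destruct (Nat.ltb_spec (S s) t0); lia.
Qed.

Lemma isum_skip d g t0 : (t0 <= d)%nat ->
  isum (S d) g = g t0 + isum d (fun s => g (skip t0 s)).
Proof.
  induction d as [|d IH]; intros H.
  - replace t0 with 0%nat by lia. simpl. lra.
  - destruct (Nat.eq_dec t0 (S d)) as [->|Hne].
    + change (isum (S (S d)) g) with (isum (S d) g + g (S d)).
      rewrite (isum_ext (S d) (fun s => g (skip (S d) s)) g); [lra|].
      intros t Ht. unfold skip. destruct (Nat.ltb_spec t (S d)); [reflexivity|lia].
    + change (isum (S (S d)) g) with (isum (S d) g + g (S d)).
      rewrite IH by lia. simpl. replace (skip t0 d) with (S d); [lra|].
      unfold skip. destruct (Nat.ltb_spec d t0); [lia|reflexivity].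
Qed.

Fixpoint zsum (n : nat) (f : nat -> Z) : Z :=
  match n with O => 0%Z | S n' => (zsum n' f + f n')%Z end.

Lemma IZR_zsum n f : IZR (zsum n f) = isum n (fun t => IZR (f t)).
Proof. induction n; simpl; [reflexivity|]. rewrite plus_IZR, IHn. reflexivity. Qed.

Definition z_independent (d : nat) (u : nat -> R) : Prop :=
  forall lam : nat -> Z, isum d (fun t => IZR (lam t) * u t) = 0 ->
    forall t, (t < d)%nat -> lam t = 0%Z.

Definition z_combinations (m : nat) (c : nat -> R) (d : nat) (u : nat -> R)
  (A : nat -> nat -> Z) : Prop :=
  forall t, (t < d)%nat -> u t = isum m (fun e => IZR (A t e) * c e).

(* One step of Gaussian elimination: the pivot row [t0] has nonzero coefficient
   [A t0 m] on the last generator [c m]; combining every other row with the pivot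
   row removes [c m] and preserves independence. *)
Section Elimination.
Variables (m d t0 : nat) (c u : nat -> R) (A : nat -> nat -> Z).

Definition elim_vec (t : nat) : R :=
  IZR (A t0 m) * u (skip t0 t) - IZR (A (skip t0 t) m) * u t0.

Definition elim_mat (t e : nat) : Z :=
  (A t0 m * A (skip t0 t) e - A (skip t0 t) m * A t0 e)%Z.

Lemma elim_combinations : (t0 < S d)%nat ->
  z_combinations (S m) c (S d) u A -> z_combinations m c d elim_vec elim_mat.
Proof.
  intros Ht0 Hu t Ht. unfold elim_vec.
  rewrite (Hu (skip t0 t)) by (apply skip_lt; lia). rewrite (Hu t0) by lia. simpl.
  replace (IZR (A t0 m) * (isum m (fun e => IZR (A (skip t0 t) e) * c e)
             + IZR (A (skip t0 t) m) * c m)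
           - IZR (A (skip t0 t) m) * (isum m (fun e => IZR (A t0 e) * c e) + IZR (A t0 m) * c m))
    with (IZR (A t0 m) * isum m (fun e => IZR (A (skip t0 t) e) * c e)
          + (- IZR (A (skip t0 t) m)) * isum m (fun e => IZR (A t0 e) * c e)) by ring.
  rewrite <- !isum_scal, <- isum_plus. apply isum_ext. intros e _.
  unfold elim_mat. rewrite minus_IZR, !mult_IZR. ring.
Qed.

Lemma elim_independent : (t0 < S d)%nat -> A t0 m <> 0%Z ->
  z_independent (S d) u -> z_independent d elim_vec.
Proof.
  intros Ht0 Hpiv Hind lam Hl t Ht.
  (* the relation [lam] on the eliminated rows lifts to a relation [mu] on [u] *)
  set (mu := fun s => if Nat.eqb s t0
                      then (- zsum d (fun r => lam r * A (skip t0 r) m))%Z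
                      else (lam (unskip t0 s) * A t0 m)%Z).
  assert (Hmu : isum (S d) (fun s => IZR (mu s) * u s) = 0).
  { rewrite (isum_skip d _ t0) by lia. unfold mu at 1. rewrite Nat.eqb_refl.
    rewrite (isum_ext d _ (fun s => IZR (lam s) * (IZR (A t0 m) * u (skip t0 s)))).
    2:{ intros s _. unfold mu. destruct (Nat.eqb_spec (skip t0 s) t0) as [E|_].
        - exfalso. exact (skip_neq t0 s E).
        - rewrite unskip_skip, mult_IZR. ring. }
    rewrite <- Hl. unfold elim_vec. rewrite opp_IZR, IZR_zsum.
    rewrite (isum_ext d (fun t => IZR (lam t) * (IZR (A t0 m) * u (skip t0 t) - _))
      (fun t => IZR (lam t) * (IZR (A t0 m) * u (skip t0 t))
                + (- u t0) * IZR (lam t * A (skip t0 t) m))) by (intros; rewrite mult_IZR; ring).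
    rewrite isum_plus, isum_scal. ring. }
  specialize (Hind mu Hmu (skip t0 t) (skip_lt t0 t d Ht)).
  unfold mu in Hind. destruct (Nat.eqb_spec (skip t0 t) t0) as [E|_].
  - exfalso. exact (skip_neq t0 t E).
  - rewrite unskip_skip in Hind. apply Z.mul_eq_0 in Hind. destruct Hind; [assumption|contradiction].
Qed.
End Elimination.

Lemma independent_combinations_le m c d u A :
  z_combinations m c d u A -> z_independent d u -> (d <= m)%nat.
Proof.
  revert c d u A. induction m as [|m IH]; intros c d u A Hu Hind.
  - destruct d as [|d]; [lia|]. exfalso.
    assert (H := Hind (fun t => if Nat.eqb t 0 then 1%Z else 0%Z)).
    rewrite (isum_ext _ _ (fun _ => 0)) in H by (intros t Ht; rewrite Hu by lia; simpl; ring).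
    specialize (H (isum_zero _) 0%nat ltac:(lia)). discriminate.
  - destruct (classic (exists t0, (t0 < d)%nat /\ A t0 m <> 0%Z)) as [[t0 [Ht0 Hpiv]]|Hnone].
    + destruct d as [|d]; [lia|].
      enough (d <= m)%nat by lia.
      apply (IH c d (elim_vec m t0 u A) (elim_mat m t0 A)).
      * apply elim_combinations; assumption.
      * apply elim_independent; assumption.
    + apply le_S, (IH c d u A); [|assumption].
      intros t Ht. rewrite Hu by assumption. simpl.
      replace (A t m) with 0%Z by (apply NNPP; intros E; apply Hnone; eauto). ring.
Qed.

Definition lsum (l : list R) : R := fold_right Rplus 0 l.

Lemma lsum_map_app {A} (f : A -> R) l1 l2 :
  lsum (map f (l1 ++ l2)) = lsum (map f l1) + lsum (map f l2).
Proof. induction l1; simpl; [lra|]. unfold lsum in *. simpl. rewrite IHl1. lra. Qed.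

Lemma lsum_flat_map {A B} (f : B -> R) (g : A -> list B) l :
  lsum (map f (flat_map g l)) = lsum (map (fun a => lsum (map f (g a))) l).
Proof.
  induction l; simpl; [reflexivity|].
  rewrite lsum_map_app. unfold lsum at 3. simpl. rewrite IHl. reflexivity.
Qed.

Lemma lsum_ext {A} (f g : A -> R) l :
  (forall a, In a l -> f a = g a) -> lsum (map f l) = lsum (map g l).
Proof. intros H. rewrite (map_ext_in f g l H). reflexivity. Qed.

Lemma lsum_le {A} (f g : A -> R) l :
  (forall a, In a l -> f a <= g a) -> lsum (map f l) <= lsum (map g l).
Proof.
  induction l; simpl; intros H; [lra|]. unfold lsum in *; simpl.
  apply Rplus_le_compat; [apply H | apply IHl]; auto.
Qed.

Lemma lsum_zero {A} (l : list A) : lsum (map (fun _ => 0) l) = 0.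
Proof. induction l; [reflexivity|]. unfold lsum in *. simpl. rewrite IHl. lra. Qed.

Lemma lsum_nonneg {A} (f : A -> R) l : (forall a, In a l -> 0 <= f a) -> 0 <= lsum (map f l).
Proof. intros H. rewrite <- (lsum_zero l). apply lsum_le. assumption. Qed.

Lemma lsum_ge_term {A} (f : A -> R) l a :
  (forall a, In a l -> 0 <= f a) -> In a l -> f a <= lsum (map f l).
Proof.
  induction l as [|b l IH]; simpl; intros H Ha; [contradiction|]. unfold lsum in *. simpl.
  destruct Ha as [<-|Ha].
  - pose proof (lsum_nonneg f l ltac:(auto)). unfold lsum in *. lra.
  - specialize (IH ltac:(auto) Ha). pose proof (H b (or_introl eq_refl)). lra.
Qed.

Lemma lsum_plus {A} (f g : A -> R) l :
  lsum (map (fun a => f a + g a) l) = lsum (map f l) + lsum (map g l).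
Proof. induction l; unfold lsum in *; simpl; [lra|]. rewrite IHl. lra. Qed.

Lemma lsum_scal {A} c (f : A -> R) l : lsum (map (fun a => c * f a) l) = c * lsum (map f l).
Proof. induction l; unfold lsum in *; simpl; [lra|]. rewrite IHl. lra. Qed.

Lemma lsum_nth {A} (f : A -> R) l d : lsum (map f l) = isum (length l) (fun i => f (nth i l d)).
Proof.
  induction l as [|a l IH]; [reflexivity|].
  simpl length. rewrite isum_shift. unfold lsum in *. simpl. rewrite IH. reflexivity.
Qed.

Lemma lsum_indicator L j c :
  (j < L)%nat -> lsum (map (fun y => if Nat.eqb y j then c else 0) (seq 0 L)) = c.
Proof.
  induction L as [|L IH]; intros H; [lia|]. rewrite seq_S, lsum_map_app. unfold lsum at 2. simpl.
  destruct (Nat.eq_dec j L) as [->|].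
  - rewrite Nat.eqb_refl, (lsum_ext _ (fun _ => 0)), lsum_zero; [lra|].
    intros y Hy. apply in_seq in Hy. destruct (Nat.eqb_spec y L); [lia|reflexivity].
  - rewrite IH by lia. destruct (Nat.eqb_spec L j); [lia|lra].
Qed.

Lemma lsum_switch (b : nat -> bool) (c : R) L :
  (forall t, (t < L)%nat -> b t = true -> b (S t) = true) ->
  lsum (map (fun t => if Bool.eqb (b t) (b (S t)) then 0 else c) (seq 0 L)) =
  if Bool.eqb (b 0%nat) (b L) then 0 else c.
Proof.
  induction L as [|L IH]; intros H.
  - simpl. destruct (b 0%nat); reflexivity.
  - rewrite seq_S, lsum_map_app, IH by (intros; apply H; [lia|assumption]).
    unfold lsum; simpl.
    assert (Hup : b 0%nat = true -> forall t, (t <= S L)%nat -> b t = true).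
    { intros h0. induction t; intros Ht; [assumption|]. apply H; [lia|]. apply IHt; lia. }
    destruct (b 0%nat) eqn:E0, (b L) eqn:EL, (b (S L)) eqn:ES; simpl; try lra;
      try (rewrite Hup in EL by (auto; lia); discriminate);
      try (rewrite Hup in ES by (auto; lia); discriminate);
      try (rewrite H in ES by (auto; lia); discriminate).
Qed.

Lemma switch_exists (b : nat -> bool) L :
  b 0%nat <> b L -> exists t, (t < L)%nat /\ b t <> b (S t).
Proof.
  induction L as [|L IH]; intros H; [contradiction|].
  destruct (Bool.bool_dec (b L) (b (S L))).
  - destruct IH as [t [? ?]]; [congruence|]. exists t; split; [lia|assumption].
  - exists L; split; [lia|assumption].
Qed.

Lemma NoDup_map_seq {B} (f : nat -> B) L :
  (forall t1 t2, (t1 < L)%nat -> (t2 < L)%nat -> f t1 = f t2 -> t1 = t2) ->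
  NoDup (map f (seq 0 L)).
Proof.
  intros H. apply NoDup_nth with (d := f 0%nat). rewrite length_map, length_seq.
  intros i j Hi Hj E. rewrite !map_nth, !seq_nth in E by lia. apply H; assumption.
Qed.

Lemma NoDup_flat_map_disjoint {A B} (g : A -> list B) l :
  NoDup l -> (forall a, In a l -> NoDup (g a)) ->
  (forall a b e, In a l -> In b l -> a <> b -> In e (g a) -> In e (g b) -> False) ->
  NoDup (flat_map g l).
Proof.
  induction l as [|a l IH]; intros H1 H2 H3; simpl; [constructor|].
  inversion H1; subst. apply NoDup_app.
  - apply H2; simpl; auto.
  - apply IH; [assumption| intros; apply H2; simpl; auto |].
    intros a0 b e h1 h2. apply H3; simpl; auto.
  - intros e He1 He2. apply in_flat_map in He2. destruct He2 as [b [Hb He2]].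
    apply (H3 a b e); simpl; auto. intros ->; contradiction.
Qed.

Lemma prime_divisor_exists : forall bound (z : Z), (1 < z)%Z -> (Z.to_nat z <= bound)%nat ->
  exists p, prime p /\ (p | z)%Z.
Proof.
  induction bound as [|bound IH]; intros z Hz Hb; [lia|].
  destruct (prime_dec z) as [Hp|Hp].
  - exists z. split; [assumption|apply Z.divide_refl].
  - destruct (not_prime_divide z Hz Hp) as [m [Hm Hmz]].
    destruct (IH m) as [p [Hp1 Hp2]]; [lia| |].
    + assert (Z.to_nat m < Z.to_nat z)%nat by (apply Z2Nat.inj_lt; lia). lia.
    + exists p. split; [assumption|]. eapply Z.divide_trans; eassumption.
Qed.

Fixpoint zfact (n : nat) : Z :=
  match n with O => 1%Z | S n' => (Z.of_nat (S n') * zfact n')%Z end.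

Lemma zfact_pos n : (1 <= zfact n)%Z.
Proof.
  induction n as [|n IH]; [simpl; lia|].
  change (zfact (S n)) with (Z.of_nat (S n) * zfact n)%Z. nia.
Qed.

Lemma divide_zfact n m : (1 <= m)%Z -> (m <= Z.of_nat n)%Z -> (m | zfact n)%Z.
Proof.
  induction n as [|n IH]; intros H1 H2; [lia|].
  change (zfact (S n)) with (Z.of_nat (S n) * zfact n)%Z.
  destruct (Z.eq_dec m (Z.of_nat (S n))) as [->|Hne].
  - apply Z.divide_factor_l.
  - apply Z.divide_mul_r, IH; lia.
Qed.

(* Euclid: a prime divisor of [N! + 1] exceeds [N]. *)
Lemma exists_prime_gt (N : Z) : exists p, prime p /\ (N < p)%Z.
Proof.
  set (n := Z.to_nat N).
  destruct (prime_divisor_exists (Z.to_nat (zfact n + 1)) (zfact n + 1)) as [p [Hp Hd]];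
    [pose proof (zfact_pos n); lia | lia |].
  exists p. split; [assumption|].
  pose proof (prime_ge_2 p Hp).
  destruct (Z_lt_le_dec N p) as [|Hle]; [assumption|exfalso].
  assert (Hf : (p | zfact n)%Z) by (apply divide_zfact; lia).
  assert (H1 : (p | 1)%Z).
  { replace 1%Z with ((zfact n + 1) - zfact n)%Z by ring. apply Z.divide_sub_r; assumption. }
  apply Z.divide_pos_le in H1; lia.
Qed.

Definition next_prime (N : Z) : Z :=
  proj1_sig (constructive_indefinite_description _ (exists_prime_gt N)).

Lemma next_prime_spec N : prime (next_prime N) /\ (N < next_prime N)%Z.
Proof. unfold next_prime. destruct (constructive_indefinite_description _ _). assumption. Qed.

Fixpoint prime_seq (t : nat) : Z :=
  match t with O => next_prime 1 | S t' => next_prime (prime_seq t') end.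

Lemma prime_seq_prime t : prime (prime_seq t).
Proof. destruct t; simpl; apply next_prime_spec. Qed.

Lemma prime_seq_increasing t s : (t < s)%nat -> (prime_seq t < prime_seq s)%Z.
Proof.
  induction s as [|s IH]; intros H; [lia|]. simpl.
  pose proof (proj2 (next_prime_spec (prime_seq s))).
  destruct (Nat.eq_dec t s) as [->|]; [lia|]. specialize (IH ltac:(lia)). lia.
Qed.

Lemma prime_seq_inj t s : prime_seq t = prime_seq s -> t = s.
Proof.
  intros H. destruct (lt_eq_lt_dec t s) as [[h|h]|h]; [| assumption |];
    apply prime_seq_increasing in h; lia.
Qed.

(* Logarithms of distinct primes are linearly independent over the integers,
   by unique factorisation: a relation would give two equal products of prime
   powers with disjoint supports. *)
Section LogPrimes.
Variable q : nat -> Z.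
Hypothesis q_prime : forall t, prime (q t).

Lemma q_pos t : (0 < q t)%Z.
Proof. pose proof (prime_ge_2 _ (q_prime t)). lia. Qed.

Fixpoint prime_power_prod (d : nat) (e : nat -> nat) : Z :=
  match d with
  | O => 1%Z
  | S d' => (prime_power_prod d' e * q d' ^ Z.of_nat (e d'))%Z
  end.

Lemma prime_power_prod_pos d e : (0 < prime_power_prod d e)%Z.
Proof.
  induction d; simpl; [lia|].
  apply Z.mul_pos_pos; [assumption|]. apply Z.pow_pos_nonneg; [apply q_pos|lia].
Qed.

Lemma ln_prime_power_prod d e :
  ln (IZR (prime_power_prod d e)) = isum d (fun t => INR (e t) * ln (IZR (q t))).
Proof.
  induction d as [|d IH]; simpl; [apply ln_1|].
  rewrite mult_IZR, ln_mult.
  - rewrite IH, <- pow_IZR, ln_pow; [reflexivity|]. apply IZR_lt, q_pos.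
  - apply IZR_lt, prime_power_prod_pos.
  - apply IZR_lt, Z.pow_pos_nonneg; [apply q_pos|lia].
Qed.

Lemma prime_divide_pow p a n : prime p -> prime a -> (p | a ^ Z.of_nat n)%Z ->
  p = a /\ (0 < n)%nat.
Proof.
  intros Hp Ha. induction n as [|n IH]; intros H.
  - simpl in H. apply Z.divide_1_r in H. pose proof (prime_ge_2 _ Hp). lia.
  - rewrite Nat2Z.inj_succ, Z.pow_succ_r in H by lia.
    apply prime_mult in H; [|assumption]. destruct H as [H|H].
    + split; [apply prime_div_prime; assumption|lia].
    + destruct (IH H). split; [assumption|lia].
Qed.

Lemma prime_divide_prime_power_prod p d e : prime p -> (p | prime_power_prod d e)%Z ->
  exists t, (t < d)%nat /\ (0 < e t)%nat /\ p = q t.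
Proof.
  intros Hp. induction d as [|d IH]; simpl; intros H.
  - apply Z.divide_1_r in H. pose proof (prime_ge_2 _ Hp). lia.
  - apply prime_mult in H; [|assumption]. destruct H as [H|H].
    + destruct (IH H) as [t [? [? ?]]]. exists t. repeat split; auto; lia.
    + apply prime_divide_pow in H; [|assumption|apply q_prime].
      destruct H. exists d. repeat split; auto; lia.
Qed.

Lemma divide_prime_power_prod d e t : (t < d)%nat -> (0 < e t)%nat ->
  (q t | prime_power_prod d e)%Z.
Proof.
  induction d as [|d IH]; intros H1 H2; [lia|]. simpl.
  destruct (Nat.eq_dec t d) as [->|].
  - apply Z.divide_mul_r. destruct (e d) as [|k]; [lia|].
    rewrite Nat2Z.inj_succ, Z.pow_succ_r by lia. apply Z.divide_factor_l.
  - apply Z.divide_mul_l, IH; [lia|assumption].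
Qed.

Lemma ln_primes_independent d :
  (forall t1 t2, (t1 < d)%nat -> (t2 < d)%nat -> q t1 = q t2 -> t1 = t2) ->
  z_independent d (fun t => ln (IZR (q t))).
Proof.
  intros Hinj lam H t0 Ht0.
  (* split the relation into positive and negative exponents *)
  set (ep := fun t => Z.to_nat (lam t)). set (en := fun t => Z.to_nat (- lam t)).
  assert (Hsplit : isum d (fun t => IZR (lam t) * ln (IZR (q t))) =
      ln (IZR (prime_power_prod d ep)) - ln (IZR (prime_power_prod d en))).
  { rewrite !ln_prime_power_prod.
    rewrite <- (Rmult_1_l (isum d (fun t => INR (en t) * _))).
    unfold Rminus. rewrite Ropp_mult_distr_l, <- isum_scal, <- isum_plus.
    apply isum_ext. intros t _. unfold ep, en. rewrite !INR_IZR_INZ.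
    destruct (Z_le_gt_dec 0 (lam t)).
    - rewrite Z2Nat.id by lia. replace (Z.to_nat (- lam t)) with 0%nat by lia. simpl. ring.
    - rewrite (Z2Nat.id (- lam t)) by lia. replace (Z.to_nat (lam t)) with 0%nat by lia.
      rewrite opp_IZR. simpl. ring. }
  assert (Heq : prime_power_prod d ep = prime_power_prod d en).
  { apply eq_IZR, ln_inv; try apply IZR_lt, prime_power_prod_pos. lra. }
  (* [q t0] divides both sides, but occurs in only one of them *)
  destruct (Z.lt_trichotomy (lam t0) 0) as [Hl|[Hl|Hl]]; [exfalso| assumption |exfalso].
  - assert (Hd : (q t0 | prime_power_prod d ep)%Z).
    { rewrite Heq. apply divide_prime_power_prod; [assumption|unfold en; lia]. }
    destruct (prime_divide_prime_power_prod _ _ _ (q_prime t0) Hd) as [t [Ht [He Hq]]].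
    assert (t = t0) by (apply Hinj; auto). subst. unfold ep in He. lia.
  - assert (Hd : (q t0 | prime_power_prod d en)%Z).
    { rewrite <- Heq. apply divide_prime_power_prod; [assumption|unfold ep; lia]. }
    destruct (prime_divide_prime_power_prod _ _ _ (q_prime t0) Hd) as [t [Ht [He Hq]]].
    assert (t = t0) by (apply Hinj; auto). subst. unfold en in He. lia.
Qed.
End LogPrimes.

(* Grid drawings: vertex [u] is drawn at the lattice point [(u / H, u mod H)],
   i.e. [c * H + r] sits in column [c] and row [r]; every edge joining two
   lattice points at distance one is drawn as the straight unit segment. *)
Definition grid_point (H u : nat) : R * R := (INR (u / H), INR (u mod H)).

Definition unit_edge (H : nat) (e : nat * nat) : Prop :=
  exists c r, ((r + 1 < H)%nat /\ e = (c * H + r, c * H + (r + 1)))%nat \/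
              ((r < H)%nat /\ e = (c * H + r, (c + 1) * H + r))%nat.

Definition grid_arc (H : nat) (l : list (nat * nat)) (i : nat) (t : R) : R * R :=
  let e := nth i l (0%nat, 0%nat) in
  (fst (grid_point H (fst e)) + t * (fst (grid_point H (snd e)) - fst (grid_point H (fst e))),
   snd (grid_point H (fst e)) + t * (snd (grid_point H (snd e)) - snd (grid_point H (fst e)))).

Lemma grid_point_enc H c r : (r < H)%nat -> grid_point H (c * H + r) = (INR c, INR r).
Proof.
  intros Hr. unfold grid_point. f_equal; f_equal.
  - rewrite Nat.div_add_l, Nat.div_small by lia. lia.
  - rewrite Nat.add_comm, Nat.Div0.mod_add. apply Nat.mod_small; lia.
Qed.

Lemma grid_point_inj H u v : (0 < H)%nat -> grid_point H u = grid_point H v -> u = v.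
Proof.
  intros HH E. unfold grid_point in E. injection E as E1 E2.
  apply INR_eq in E1. apply INR_eq in E2.
  rewrite (Nat.div_mod u H), (Nat.div_mod v H) by lia. rewrite E1, E2. reflexivity.
Qed.

Lemma INR_sub a b : INR a - INR b = IZR (Z.of_nat a - Z.of_nat b).
Proof. rewrite minus_IZR, <- !INR_IZR_INZ. reflexivity. Qed.

Lemma IZR_unit_interval (z : Z) : 0 <= IZR z <= 1 -> IZR z = 0 \/ IZR z = 1.
Proof.
  intros [H1 H2]. apply le_IZR in H1. apply le_IZR in H2.
  assert (z = 0 \/ z = 1)%Z as [->| ->] by lia; auto.
Qed.

Lemma IZR_not_inside_unit (z : Z) : ~ (0 < IZR z < 1).
Proof. intros [H1 H2]. apply lt_IZR in H1. apply lt_IZR in H2. lia. Qed.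

Lemma aligned_segments_meet a1 a2 s t : 0 <= s <= 1 -> 0 <= t <= 1 ->
  INR a1 + s = INR a2 + t -> a1 = a2 \/ ((s = 0 \/ s = 1) /\ (t = 0 \/ t = 1)).
Proof.
  intros Hs Ht E. assert (Hz : INR a2 - INR a1 = s - t) by lra. rewrite INR_sub in Hz.
  destruct (Z.lt_trichotomy (Z.of_nat a2 - Z.of_nat a1) 0) as [Hl|[Hl|Hl]].
  - assert (Z.of_nat a2 - Z.of_nat a1 <= -1)%Z as Hle by lia. apply IZR_le in Hle. right; lra.
  - left. lia.
  - assert (1 <= Z.of_nat a2 - Z.of_nat a1)%Z as Hle by lia. apply IZR_le in Hle. right; lra.
Qed.

Lemma crossing_segments_meet c1 r1 c2 r2 s t : 0 <= s <= 1 -> 0 <= t <= 1 ->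
  INR c1 = INR c2 + t -> INR r1 + s = INR r2 -> (s = 0 \/ s = 1) /\ (t = 0 \/ t = 1).
Proof.
  intros Hs Ht E1 E2. split.
  - destruct (IZR_unit_interval (Z.of_nat r2 - Z.of_nat r1)); rewrite <- INR_sub in *; lra.
  - destruct (IZR_unit_interval (Z.of_nat c1 - Z.of_nat c2)); rewrite <- INR_sub in *; lra.
Qed.

Section GridDrawing.
Variables (H : nat) (l : list (nat * nat)).
Hypothesis H_pos : (0 < H)%nat.
Hypothesis l_unit : Forall (unit_edge H) l.

Lemma grid_arc_shape i : (i < length l)%nat -> exists c r (b : bool),
  nth i l (0%nat, 0%nat) =
    (if b then (c * H + r, c * H + (r + 1)) else (c * H + r, (c + 1) * H + r))%nat /\
  grid_point H (fst (nth i l (0%nat, 0%nat))) = (INR c, INR r) /\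
  grid_point H (snd (nth i l (0%nat, 0%nat))) =
    (if b then (INR c, INR r + 1) else (INR c + 1, INR r)) /\
  forall t, grid_arc H l i t = (if b then (INR c, INR r + t) else (INR c + t, INR r)).
Proof.
  intros Hi. rewrite Forall_forall in l_unit.
  destruct (l_unit _ (nth_In _ (0%nat, 0%nat) Hi)) as [c [r [[Hr E]|[Hr E]]]].
  - exists c, r, true.
    assert (P0 : grid_point H (fst (nth i l (0%nat, 0%nat))) = (INR c, INR r))
      by (rewrite E; apply grid_point_enc; lia).
    assert (P1 : grid_point H (snd (nth i l (0%nat, 0%nat))) = (INR c, INR r + 1))
      by (rewrite E; simpl snd; rewrite grid_point_enc, plus_INR by lia; reflexivity).
    repeat split; try assumption. intros t. unfold grid_arc. rewrite P0, P1. simpl. f_equal; ring.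
  - exists c, r, false.
    assert (P0 : grid_point H (fst (nth i l (0%nat, 0%nat))) = (INR c, INR r))
      by (rewrite E; apply grid_point_enc; lia).
    assert (P1 : grid_point H (snd (nth i l (0%nat, 0%nat))) = (INR c + 1, INR r))
      by (rewrite E; simpl snd; rewrite grid_point_enc, plus_INR by lia; reflexivity).
    repeat split; try assumption. intros t. unfold grid_arc. rewrite P0, P1. simpl. f_equal; ring.
Qed.

Lemma grid_arc_jordan i : (i < length l)%nat ->
  let e := nth i l (0%nat, 0%nat) in
  cont_on01 (grid_arc H l i) /\ inj_on01 (grid_arc H l i) /\
  grid_arc H l i 0 = grid_point H (fst e) /\ grid_arc H l i 1 = grid_point H (snd e) /\
  (forall t w, 0 < t < 1 -> grid_arc H l i t <> grid_point H w).
Proof.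
  intros Hi. simpl.
  destruct (grid_arc_shape i Hi) as [c [r [b [_ [H0 [H1 Hg]]]]]].
  repeat split.
  - intros t _ eps Heps. exists eps. split; [assumption|]. intros s _ Hs. rewrite !Hg.
    destruct b; simpl; unfold Rminus; rewrite ?Rplus_opp_r, ?Rabs_R0; split; try lra;
      match goal with |- Rabs ?x < _ => replace x with (s - t) by ring; assumption end.
  - intros s t _ _ E. rewrite !Hg in E. destruct b; injection E; lra.
  - rewrite Hg, H0. destruct b; f_equal; ring.
  - rewrite Hg, H1. destruct b; f_equal; ring.
  - intros t w Ht E. rewrite Hg in E. unfold grid_point in E.
    destruct b; injection E as E1 E2.
    + apply (IZR_not_inside_unit (Z.of_nat (w mod H) - Z.of_nat r)). rewrite <- INR_sub. lra.
    + apply (IZR_not_inside_unit (Z.of_nat (w / H) - Z.of_nat c)). rewrite <- INR_sub. lra.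
Qed.

Hypothesis l_nodup : NoDup l.

Lemma grid_arcs_disjoint i j s t : (i < length l)%nat -> (j < length l)%nat -> i <> j ->
  0 <= s <= 1 -> 0 <= t <= 1 -> grid_arc H l i s = grid_arc H l j t ->
  (s = 0 \/ s = 1) /\ (t = 0 \/ t = 1).
Proof.
  intros Hi Hj Hij Hs Ht E.
  destruct (grid_arc_shape i Hi) as [c1 [r1 [b1 [He1 [_ [_ Hg1]]]]]].
  destruct (grid_arc_shape j Hj) as [c2 [r2 [b2 [He2 [_ [_ Hg2]]]]]].
  assert (Hne : nth i l (0%nat, 0%nat) <> nth j l (0%nat, 0%nat)).
  { intros Eij. apply Hij. eapply NoDup_nth; eassumption. }
  rewrite Hg1, Hg2 in E. destruct b1, b2; injection E as Ex Ey.
  - apply INR_eq in Ex. subst c2.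
    destruct (aligned_segments_meet r1 r2 s t Hs Ht Ey) as [->|]; [|assumption].
    exfalso. apply Hne. rewrite He1, He2. reflexivity.
  - apply crossing_segments_meet with c1 r1 c2 r2; lra.
  - destruct (crossing_segments_meet c2 r2 c1 r1 t s); [lra..| split; assumption].
  - apply INR_eq in Ey. subst r2.
    destruct (aligned_segments_meet c1 c2 s t Hs Ht Ex) as [->|]; [|assumption].
    exfalso. apply Hne. rewrite He1, He2. reflexivity.
Qed.
End GridDrawing.

Lemma planar_of_unit_edges (N : network) (H : nat) :
  (0 < H)%nat -> Forall (unit_edge H) (edges N) -> NoDup (edges N) -> planar N.
Proof.
  intros HH Hunit Hnodup. exists (grid_point H), (grid_arc H (edges N)). split; [|split].
  - intros u v _ _. apply grid_point_inj; assumption.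
  - intros i Hi. destruct (grid_arc_jordan H (edges N) HH Hunit i Hi) as [? [? [? [? Hv]]]].
    repeat split; try assumption. intros t w Ht _. apply Hv; assumption.
  - intros i j s t Hi Hj Hij Hs Ht. apply grid_arcs_disjoint; assumption.
Qed.

Lemma cut_cost_negb N W : cut_cost N (fun u => negb (W u)) = cut_cost N W.
Proof.
  unfold cut_cost. f_equal. apply map_ext. intros e.
  destruct (W (fst e)), (W (snd e)); reflexivity.
Qed.

(* For [x, y < n]:
   - the spine [A_x] is a vertical path in column [x], from row [lrow x 0] up to
     row [lrow x (n-1)]; the terminal [a_x] is its lowest vertex;
   - the spine [B_y] is a horizontal path in row [y], from column [lcol 0 y] to
     column [lcol (n-1) y]; the terminal [b_y] is its leftmost vertex;
   - the L-path [(x, y)] leaves [A_x] at row [lrow x y], runs right to column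
     [lcol x y], then down to row [y], where it meets [B_y].
   Spine edges cost [heavy] (more than all L-paths together) and the edges of
   the L-path [(x, y)] cost [weight x y], the logarithm of the [(x n + y)]-th
   prime.  The rows [lrow x y] and the columns [lcol x y] are pairwise distinct
   and at least [n], so the L-paths only cross and never share an edge. *)
Section GridNetwork.
Variable n : nat.
Hypothesis n_pos : (0 < n)%nat.

Definition side : nat := (n + n * n)%nat.
Definition vtx (c r : nat) : nat := (c * side + r)%nat.
Definition lrow (x y : nat) : nat := (n + x * n + y)%nat.
Definition lcol (x y : nat) : nat := (n + y * n + x)%nat.

Definition weight (x y : nat) : R := ln (IZR (prime_seq (x * n + y))).

Definition pairs : list (nat * nat) :=
  flat_map (fun x => map (fun y => (x, y)) (seq 0 n)) (seq 0 n).

Definition heavy : R := 1 + lsum (map (fun p => weight (fst p) (snd p)) pairs).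

Definition spine_a : list (nat * nat) :=
  flat_map (fun x => map (fun y => (vtx x (lrow x y), vtx x (lrow x y + 1))) (seq 0 (n - 1)))
    (seq 0 n).
Definition spine_b : list (nat * nat) :=
  flat_map (fun y => map (fun x => (vtx (lcol x y) y, vtx (lcol x y + 1) y)) (seq 0 (n - 1)))
    (seq 0 n).
Definition leg_h (x y : nat) : list (nat * nat) :=
  map (fun t => (vtx (x + t) (lrow x y), vtx (x + t + 1) (lrow x y))) (seq 0 (n + y * n)).
Definition leg_v (x y : nat) : list (nat * nat) :=
  map (fun t => (vtx (lcol x y) (y + t), vtx (lcol x y) (y + t + 1))) (seq 0 (n + x * n)).
Definition lpath (p : nat * nat) : list (nat * nat) := leg_h (fst p) (snd p) ++ leg_v (fst p) (snd p).

Definition grid_edges : list (nat * nat) := spine_a ++ spine_b ++ flat_map lpath pairs.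

(* The cost is read off the position of the edge: vertical edges in the first
   [n] columns and horizontal edges in the first [n] rows are spine edges;
   otherwise the column (resp. row) encodes the L-path. *)
Definition grid_cost (e : nat * nat) : R :=
  let c := (fst e / side)%nat in let r := (fst e mod side)%nat in
  if Nat.eqb (snd e) (S (fst e))
  then (if Nat.ltb c n then heavy else weight ((c - n) mod n) ((c - n) / n))
  else (if Nat.ltb r n then heavy else weight ((r - n) / n) ((r - n) mod n)).

Definition grid_network : network := mkNet (side * side) grid_edges grid_cost.

Lemma side_ge : (n * n <= side /\ 1 < side)%nat.
Proof. unfold side. nia. Qed.

Lemma vtx_div c r : (r < side)%nat -> (vtx c r / side = c)%nat.
Proof. intros H. unfold vtx. rewrite Nat.div_add_l, Nat.div_small by lia. lia. Qed.

Lemma vtx_mod c r : (r < side)%nat -> (vtx c r mod side = r)%nat.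
Proof. intros H. unfold vtx. rewrite Nat.add_comm, Nat.Div0.mod_add. apply Nat.mod_small; lia. Qed.

Lemma divmod_n x y : (y < n)%nat -> ((x * n + y) / n = x /\ (x * n + y) mod n = y)%nat.
Proof.
  intros H. split.
  - rewrite Nat.div_add_l, Nat.div_small by lia. lia.
  - rewrite Nat.add_comm, Nat.Div0.mod_add. apply Nat.mod_small; lia.
Qed.

Lemma lrow_lt x y : (x < n -> y < n -> lrow x y < side)%nat.
Proof. unfold lrow, side. nia. Qed.

Lemma lcol_lt x y : (x < n -> y < n -> lcol x y < side)%nat.
Proof. unfold lcol, side. nia. Qed.

Lemma lrow_inj x y x' y' : (y < n)%nat -> (y' < n)%nat -> lrow x y = lrow x' y' -> x = x' /\ y = y'.
Proof.
  intros H1 H2 E. destruct (divmod_n x y H1) as [a1 b1]. destruct (divmod_n x' y' H2) as [a2 b2].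
  unfold lrow in E. replace (x * n + y)%nat with (x' * n + y')%nat in a1, b1 by lia.
  split; congruence.
Qed.

Lemma lcol_inj x y x' y' : (x < n)%nat -> (x' < n)%nat -> lcol x y = lcol x' y' -> x = x' /\ y = y'.
Proof.
  intros H1 H2 E. destruct (divmod_n y x H1) as [a1 b1]. destruct (divmod_n y' x' H2) as [a2 b2].
  unfold lcol in E. replace (y * n + x)%nat with (y' * n + x')%nat in a1, b1 by lia.
  split; congruence.
Qed.

Lemma weight_pos x y : 0 < weight x y.
Proof.
  unfold weight. rewrite <- ln_1. apply ln_increasing; [lra|].
  apply IZR_lt. pose proof (prime_ge_2 _ (prime_seq_prime (x * n + y))). lia.
Qed.

Lemma in_pairs p : In p pairs <-> (fst p < n /\ snd p < n)%nat.
Proof.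
  unfold pairs. rewrite in_flat_map. split.
  - intros [x [Hx Hp]]. apply in_map_iff in Hp. destruct Hp as [y [<- Hy]].
    apply in_seq in Hx. apply in_seq in Hy. simpl. lia.
  - destruct p as [x y]. simpl. intros [Hx Hy]. exists x. split; [apply in_seq; lia|].
    apply in_map_iff. exists y. split; [reflexivity|]. apply in_seq; lia.
Qed.

Lemma heavy_pos : 0 < heavy.
Proof.
  unfold heavy. pose proof (lsum_nonneg (fun p => weight (fst p) (snd p)) pairs
    ltac:(intros; apply Rlt_le, weight_pos)). lra.
Qed.

Lemma in_spine_a e : In e spine_a -> exists x y, (x < n /\ y < n - 1)%nat /\
  e = (vtx x (lrow x y), vtx x (lrow x y + 1)).
Proof.
  unfold spine_a. rewrite in_flat_map. intros [x [Hx He]]. apply in_map_iff in He.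
  destruct He as [y [<- Hy]]. apply in_seq in Hx. apply in_seq in Hy. exists x, y. split; [lia|reflexivity].
Qed.

Lemma in_spine_b e : In e spine_b -> exists x y, (y < n /\ x < n - 1)%nat /\
  e = (vtx (lcol x y) y, vtx (lcol x y + 1) y).
Proof.
  unfold spine_b. rewrite in_flat_map. intros [y [Hy He]]. apply in_map_iff in He.
  destruct He as [x [<- Hx]]. apply in_seq in Hx. apply in_seq in Hy. exists x, y. split; [lia|reflexivity].
Qed.

Lemma in_leg_h x y e : In e (leg_h x y) <-> exists t, (t < n + y * n)%nat /\
  e = (vtx (x + t) (lrow x y), vtx (x + t + 1) (lrow x y)).
Proof.
  unfold leg_h. rewrite in_map_iff. split.
  - intros [t [<- Ht]]. apply in_seq in Ht. exists t. split; [lia|reflexivity].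
  - intros [t [Ht ->]]. exists t. split; [reflexivity|]. apply in_seq; lia.
Qed.

Lemma in_leg_v x y e : In e (leg_v x y) <-> exists t, (t < n + x * n)%nat /\
  e = (vtx (lcol x y) (y + t), vtx (lcol x y) (y + t + 1)).
Proof.
  unfold leg_v. rewrite in_map_iff. split.
  - intros [t [<- Ht]]. apply in_seq in Ht. exists t. split; [lia|reflexivity].
  - intros [t [Ht ->]]. exists t. split; [reflexivity|]. apply in_seq; lia.
Qed.

Lemma in_grid_edges e : In e grid_edges ->
  In e spine_a \/ In e spine_b \/
  exists x y, (x < n /\ y < n)%nat /\ (In e (leg_h x y) \/ In e (leg_v x y)).
Proof.
  unfold grid_edges. intros H. apply in_app_or in H. destruct H as [H|H]; [auto|].
  apply in_app_or in H. destruct H as [H|H]; [auto|]. right; right.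
  apply in_flat_map in H. destruct H as [[x y] [Hp He]]. apply in_pairs in Hp.
  exists x, y. split; [assumption|]. apply in_app_or in He. assumption.
Qed.

Lemma lpath_in_grid_edges p e : In p pairs -> In e (lpath p) -> In e grid_edges.
Proof.
  intros. unfold grid_edges. apply in_or_app. right. apply in_or_app. right.
  apply in_flat_map. eauto.
Qed.

Lemma cost_leg_h x y e : (x < n)%nat -> (y < n)%nat -> In e (leg_h x y) -> grid_cost e = weight x y.
Proof.
  intros Hx Hy H. apply in_leg_h in H. destruct H as [t [Ht ->]].
  pose proof side_ge. pose proof (lrow_lt x y Hx Hy).
  unfold grid_cost. simpl fst; simpl snd.
  replace (Nat.eqb (vtx (x + t + 1) (lrow x y)) (S (vtx (x + t) (lrow x y)))) with false
    by (symmetry; apply Nat.eqb_neq; unfold vtx; nia).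
  rewrite vtx_mod by lia.
  replace (Nat.ltb (lrow x y) n) with false by (symmetry; apply Nat.ltb_ge; unfold lrow; lia).
  replace (lrow x y - n)%nat with (x * n + y)%nat by (unfold lrow; lia).
  destruct (divmod_n x y Hy) as [-> ->]. reflexivity.
Qed.

Lemma cost_leg_v x y e : (x < n)%nat -> (y < n)%nat -> In e (leg_v x y) -> grid_cost e = weight x y.
Proof.
  intros Hx Hy H. apply in_leg_v in H. destruct H as [t [Ht ->]].
  pose proof side_ge. pose proof (lcol_lt x y Hx Hy).
  assert (y + t + 1 < side)%nat by (unfold side; nia).
  unfold grid_cost. simpl fst; simpl snd.
  replace (Nat.eqb (vtx (lcol x y) (y + t + 1)) (S (vtx (lcol x y) (y + t)))) with true
    by (symmetry; apply Nat.eqb_eq; unfold vtx; lia).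
  rewrite vtx_div by lia.
  replace (Nat.ltb (lcol x y) n) with false by (symmetry; apply Nat.ltb_ge; unfold lcol; lia).
  replace (lcol x y - n)%nat with (y * n + x)%nat by (unfold lcol; lia).
  destruct (divmod_n y x Hx) as [-> ->]. reflexivity.
Qed.

Lemma cost_spine_a e : In e spine_a -> grid_cost e = heavy.
Proof.
  intros H. destruct (in_spine_a e H) as [x [y [Hxy ->]]].
  pose proof side_ge. pose proof (lrow_lt x (y + 1) ltac:(lia) ltac:(lia)).
  assert (lrow x y + 1 < side)%nat by (unfold lrow in *; lia).
  unfold grid_cost. simpl fst; simpl snd.
  replace (Nat.eqb (vtx x (lrow x y + 1)) (S (vtx x (lrow x y)))) with true
    by (symmetry; apply Nat.eqb_eq; unfold vtx; lia).
  rewrite vtx_div by lia. replace (Nat.ltb x n) with true by (symmetry; apply Nat.ltb_lt; lia).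
  reflexivity.
Qed.

Lemma cost_spine_b e : In e spine_b -> grid_cost e = heavy.
Proof.
  intros H. destruct (in_spine_b e H) as [x [y [Hxy ->]]].
  pose proof side_ge. pose proof (lcol_lt x y ltac:(lia) ltac:(lia)).
  unfold grid_cost. simpl fst; simpl snd.
  replace (Nat.eqb (vtx (lcol x y + 1) y) (S (vtx (lcol x y) y))) with false
    by (symmetry; apply Nat.eqb_neq; unfold vtx; nia).
  rewrite vtx_mod by lia. replace (Nat.ltb y n) with true by (symmetry; apply Nat.ltb_lt; lia).
  reflexivity.
Qed.

Lemma grid_cost_pos e : In e grid_edges -> 0 < grid_cost e.
Proof.
  intros H. destruct (in_grid_edges e H) as [h|[h|[x [y [[Hx Hy] [h|h]]]]]].
  - rewrite cost_spine_a by assumption. apply heavy_pos.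
  - rewrite cost_spine_b by assumption. apply heavy_pos.
  - rewrite (cost_leg_h x y) by assumption. apply weight_pos.
  - rewrite (cost_leg_v x y) by assumption. apply weight_pos.
Qed.

Definition is_vertical (e : nat * nat) : bool := Nat.eqb (snd e) (S (fst e)).
Definition ecol (e : nat * nat) : nat := (fst e / side)%nat.
Definition erow (e : nat * nat) : nat := (fst e mod side)%nat.

Definition grid_edge_ok (e : nat * nat) : Prop :=
  unit_edge side e /\ (fst e < snd e /\ snd e < side * side)%nat.

Lemma vertical_edge_data c r : (r + 1 < side)%nat -> (c < side)%nat ->
  let e := (vtx c r, vtx c (r + 1)) in
  is_vertical e = true /\ ecol e = c /\ erow e = r /\ grid_edge_ok e.
Proof.
  intros H1 H2. pose proof side_ge. unfold is_vertical, ecol, erow, grid_edge_ok. simpl.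
  rewrite vtx_div, vtx_mod by lia. repeat split.
  - apply Nat.eqb_eq. unfold vtx. lia.
  - exists c, r. left. split; [assumption|reflexivity].
  - unfold vtx. lia.
  - unfold vtx. nia.
Qed.

Lemma horizontal_edge_data c r : (r < side)%nat -> (c + 1 < side)%nat ->
  let e := (vtx c r, vtx (c + 1) r) in
  is_vertical e = false /\ ecol e = c /\ erow e = r /\ grid_edge_ok e.
Proof.
  intros H1 H2. pose proof side_ge. unfold is_vertical, ecol, erow, grid_edge_ok. simpl.
  rewrite vtx_div, vtx_mod by lia. repeat split.
  - apply Nat.eqb_neq. unfold vtx. nia.
  - exists c, r. right. split; [assumption|reflexivity].
  - unfold vtx. nia.
  - unfold vtx. nia.
Qed.

Lemma spine_a_data e : In e spine_a -> exists x y, (x < n /\ y < n - 1)%nat /\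
  is_vertical e = true /\ ecol e = x /\ erow e = lrow x y /\ grid_edge_ok e.
Proof.
  intros H. destruct (in_spine_a e H) as [x [y [Hxy ->]]]. pose proof side_ge.
  destruct (vertical_edge_data x (lrow x y)) as [? [? [? ?]]]; [unfold lrow, side; nia | unfold side; nia |].
  exists x, y. split; [lia|tauto].
Qed.

Lemma spine_b_data e : In e spine_b -> exists x y, (y < n /\ x < n - 1)%nat /\
  is_vertical e = false /\ ecol e = lcol x y /\ erow e = y /\ grid_edge_ok e.
Proof.
  intros H. destruct (in_spine_b e H) as [x [y [Hxy ->]]]. pose proof side_ge.
  destruct (horizontal_edge_data (lcol x y) y) as [? [? [? ?]]]; [unfold side; nia | unfold lcol, side; nia |].
  exists x, y. split; [lia|tauto].
Qed.

Lemma leg_h_data x y e : (x < n)%nat -> (y < n)%nat -> In e (leg_h x y) ->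
  exists t, (t < n + y * n)%nat /\
  is_vertical e = false /\ ecol e = (x + t)%nat /\ erow e = lrow x y /\ grid_edge_ok e.
Proof.
  intros Hx Hy H. apply in_leg_h in H. destruct H as [t [Ht ->]]. pose proof side_ge.
  destruct (horizontal_edge_data (x + t) (lrow x y)) as [? [? [? ?]]];
    [apply lrow_lt; assumption | unfold side; nia |].
  exists t. split; [lia|tauto].
Qed.

Lemma leg_v_data x y e : (x < n)%nat -> (y < n)%nat -> In e (leg_v x y) ->
  exists t, (t < n + x * n)%nat /\
  is_vertical e = true /\ ecol e = lcol x y /\ erow e = (y + t)%nat /\ grid_edge_ok e.
Proof.
  intros Hx Hy H. apply in_leg_v in H. destruct H as [t [Ht ->]]. pose proof side_ge.
  destruct (vertical_edge_data (lcol x y) (y + t)) as [? [? [? ?]]];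
    [unfold side; nia | apply lcol_lt; assumption |].
  exists t. split; [lia|tauto].
Qed.

Lemma grid_edges_ok e : In e grid_edges -> grid_edge_ok e.
Proof.
  intros H. destruct (in_grid_edges e H) as [h|[h|[x [y [[Hx Hy] [h|h]]]]]].
  - destruct (spine_a_data e h) as [? [? [? [? [? [? ?]]]]]]; assumption.
  - destruct (spine_b_data e h) as [? [? [? [? [? [? ?]]]]]]; assumption.
  - destruct (leg_h_data x y e Hx Hy h) as [? [? [? [? [? ?]]]]]; assumption.
  - destruct (leg_v_data x y e Hx Hy h) as [? [? [? [? [? ?]]]]]; assumption.
Qed.

Lemma lpath_edge_data p e : In p pairs -> In e (lpath p) ->
  (is_vertical e = true /\ (n <= ecol e)%nat) \/ (is_vertical e = false /\ (n <= erow e)%nat).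
Proof.
  intros Hp He. apply in_pairs in Hp. destruct p as [x y]. simpl in Hp.
  apply in_app_or in He. destruct He as [He|He].
  - destruct (leg_h_data x y e ltac:(lia) ltac:(lia) He) as [? [_ [o [_ [-> _]]]]].
    right. split; [assumption| unfold lrow; lia].
  - destruct (leg_v_data x y e ltac:(lia) ltac:(lia) He) as [? [_ [o [-> _]]]].
    left. split; [assumption| unfold lcol; lia].
Qed.

(* Each edge family is duplicate-free: spine edges are told apart by their
   column (spine A) or row (spine B), leg edges by their position along the leg. *)
Lemma NoDup_spine_a : NoDup spine_a.
Proof.
  pose proof side_ge. unfold spine_a. apply NoDup_flat_map_disjoint.
  - apply seq_NoDup.
  - intros x Hx. apply NoDup_map_seq. intros t1 t2 _ _ E. injection E as E1 _.
    unfold vtx, lrow in E1. lia.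
  - intros a b e Ha Hb Hab H1 H2. apply in_seq in Ha, Hb.
    apply in_map_iff in H1, H2. destruct H1 as [y1 [E1 Hy1]], H2 as [y2 [E2 Hy2]].
    apply in_seq in Hy1, Hy2. apply Hab.
    transitivity (ecol e); [rewrite <- E1 | rewrite <- E2]; unfold ecol; simpl;
      rewrite vtx_div; try reflexivity; unfold lrow, side; nia.
Qed.

Lemma NoDup_spine_b : NoDup spine_b.
Proof.
  pose proof side_ge. unfold spine_b. apply NoDup_flat_map_disjoint.
  - apply seq_NoDup.
  - intros y Hy. apply in_seq in Hy. apply NoDup_map_seq. intros t1 t2 _ _ E.
    injection E as E1 _. unfold vtx, lcol in E1. nia.
  - intros a b e Ha Hb Hab H1 H2. apply in_seq in Ha, Hb.
    apply in_map_iff in H1, H2. destruct H1 as [x1 [E1 Hx1]], H2 as [x2 [E2 Hx2]].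
    apply in_seq in Hx1, Hx2. apply Hab.
    transitivity (erow e); [rewrite <- E1 | rewrite <- E2]; unfold erow; simpl;
      rewrite vtx_mod; try reflexivity; unfold side; nia.
Qed.

Lemma NoDup_pairs : NoDup pairs.
Proof.
  unfold pairs. apply NoDup_flat_map_disjoint.
  - apply seq_NoDup.
  - intros x _. apply NoDup_map_seq. intros t1 t2 _ _ E. injection E; auto.
  - intros a b e _ _ Hab H1 H2. apply in_map_iff in H1, H2.
    destruct H1 as [y1 [<- _]], H2 as [y2 [E _]]. injection E; auto.
Qed.

Lemma NoDup_lpath x y : (x < n)%nat -> (y < n)%nat -> NoDup (lpath (x, y)).
Proof.
  intros Hx Hy. pose proof side_ge. unfold lpath. simpl. apply NoDup_app.
  - apply NoDup_map_seq. intros t1 t2 _ _ E. injection E as E1 _. unfold vtx in E1. nia.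
  - apply NoDup_map_seq. intros t1 t2 _ _ E. injection E as E1 _. unfold vtx in E1. lia.
  - intros e h1 h2. destruct (leg_h_data x y e Hx Hy h1) as [? [? [o1 _]]].
    destruct (leg_v_data x y e Hx Hy h2) as [? [? [o2 _]]]. congruence.
Qed.

(* Different L-paths share no edge: a horizontal edge determines [lrow x y],
   a vertical one [lcol x y]. *)
Lemma lpaths_disjoint x y x' y' e : (x < n)%nat -> (y < n)%nat -> (x' < n)%nat -> (y' < n)%nat ->
  In e (lpath (x, y)) -> In e (lpath (x', y')) -> (x, y) = (x', y').
Proof.
  intros Hx Hy Hx' Hy' h1 h2. unfold lpath in h1, h2. simpl in h1, h2.
  apply in_app_or in h1, h2. destruct h1 as [h1|h1], h2 as [h2|h2].
  - destruct (leg_h_data x y e Hx Hy h1) as [? [? [_ [_ [r1 _]]]]].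
    destruct (leg_h_data x' y' e Hx' Hy' h2) as [? [? [_ [_ [r2 _]]]]].
    rewrite r1 in r2. destruct (lrow_inj x y x' y'); [assumption..|congruence].
  - destruct (leg_h_data x y e Hx Hy h1) as [? [? [o1 _]]].
    destruct (leg_v_data x' y' e Hx' Hy' h2) as [? [? [o2 _]]]. congruence.
  - destruct (leg_v_data x y e Hx Hy h1) as [? [? [o1 _]]].
    destruct (leg_h_data x' y' e Hx' Hy' h2) as [? [? [o2 _]]]. congruence.
  - destruct (leg_v_data x y e Hx Hy h1) as [? [? [_ [r1 _]]]].
    destruct (leg_v_data x' y' e Hx' Hy' h2) as [? [? [_ [r2 _]]]].
    rewrite r1 in r2. destruct (lcol_inj x y x' y'); [assumption..|congruence].
Qed.

Lemma NoDup_lpaths : NoDup (flat_map lpath pairs).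
Proof.
  apply NoDup_flat_map_disjoint.
  - apply NoDup_pairs.
  - intros [x y] Hp. apply in_pairs in Hp. apply NoDup_lpath; apply Hp.
  - intros [x y] [x' y'] e Hp Hp' Hne h1 h2. apply in_pairs in Hp, Hp'. simpl in Hp, Hp'.
    apply Hne, (lpaths_disjoint x y x' y' e); tauto.
Qed.

(* The families are pairwise disjoint by orientation and position. *)
Lemma NoDup_grid_edges : NoDup grid_edges.
Proof.
  unfold grid_edges. apply NoDup_app; [apply NoDup_spine_a| apply NoDup_app |].
  - apply NoDup_spine_b.
  - apply NoDup_lpaths.
  - intros e h1 h2. apply in_flat_map in h2. destruct h2 as [p [Hp h2]].
    destruct (spine_b_data e h1) as [x [y [Hxy [o1 [_ [r1 _]]]]]].
    destruct (lpath_edge_data p e Hp h2) as [[o2 _]|[_ r2]]; [congruence | lia].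
  - intros e h1 h2. destruct (spine_a_data e h1) as [x [y [Hxy [o1 [c1 _]]]]].
    apply in_app_or in h2. destruct h2 as [h2|h2].
    + destruct (spine_b_data e h2) as [? [? [? [o2 _]]]]. congruence.
    + apply in_flat_map in h2. destruct h2 as [p [Hp h2]].
      destruct (lpath_edge_data p e Hp h2) as [[_ c2]|[o2 _]]; [lia | congruence].
Qed.

Lemma grid_network_wf : wf_network grid_network.
Proof.
  split.
  - apply Forall_forall. intros e He. destruct (grid_edges_ok e He) as [_ [h1 h2]].
    unfold edge_ok. simpl. repeat split; try lia. apply grid_cost_pos. assumption.
  - simpl. rewrite (map_ext_in unord (fun e => e)).
    + rewrite map_id. apply NoDup_grid_edges.
    + intros e He. destruct (grid_edges_ok e He) as [_ [h1 h2]]. unfold unord.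
      destruct e as [u v]; simpl in *. f_equal; lia.
Qed.

Lemma grid_network_planar : planar grid_network.
Proof.
  apply (planar_of_unit_edges grid_network side).
  - pose proof side_ge. lia.
  - apply Forall_forall. intros e He. apply grid_edges_ok. assumption.
  - apply NoDup_grid_edges.
Qed.

Definition terminal_a (x : nat) : nat := vtx x (lrow x 0).
Definition terminal_b (y : nat) : nat := vtx (lcol 0 y) y.

(* The weight of the L-paths whose two ends lie on different sides when
   [a_x] is on the [W]-side iff [i <= x] and [b_y] iff [j <= y]. *)
Definition crossing_weight (i j : nat) : R :=
  lsum (map (fun p => if Bool.eqb (Nat.leb i (fst p)) (Nat.leb j (snd p))
                      then 0 else weight (fst p) (snd p)) pairs).

(* The region above row [lrow i 0] or right of column [lcol 0 j]; it realises
   [crossing_weight i j]. *)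
Definition standard_cut (i j : nat) (u : nat) : bool :=
  (Nat.leb (n + i * n) (u mod side) || Nat.leb (n + j * n) (u / side))%bool.

Definition edge_cut_cost (W : nat -> bool) (e : nat * nat) : R :=
  if Bool.eqb (W (fst e)) (W (snd e)) then 0 else grid_cost e.

Lemma cut_cost_grid W : cut_cost grid_network W = lsum (map (edge_cut_cost W) grid_edges).
Proof. reflexivity. Qed.

Lemma edge_cut_cost_nonneg W e : In e grid_edges -> 0 <= edge_cut_cost W e.
Proof.
  intros H. unfold edge_cut_cost. destruct (Bool.eqb _ _); [lra|].
  apply Rlt_le, grid_cost_pos. assumption.
Qed.

Lemma crossing_weight_lt_heavy i j : crossing_weight i j < heavy.
Proof.
  assert (crossing_weight i j <= lsum (map (fun p => weight (fst p) (snd p)) pairs)).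
  { unfold crossing_weight. apply lsum_le. intros p _.
    destruct (Bool.eqb _ _); [apply Rlt_le, weight_pos|lra]. }
  unfold heavy. lra.
Qed.

Lemma leg_h_in x y t : (t < n + y * n)%nat ->
  In (vtx (x + t) (lrow x y), vtx (x + t + 1) (lrow x y)) (leg_h x y).
Proof. intros. apply in_leg_h. exists t. split; [assumption|reflexivity]. Qed.

Lemma leg_v_in x y t : (t < n + x * n)%nat ->
  In (vtx (lcol x y) (y + t), vtx (lcol x y) (y + t + 1)) (leg_v x y).
Proof. intros. apply in_leg_v. exists t. split; [assumption|reflexivity]. Qed.

Lemma spine_a_constant (W : nat -> bool) x : (x < n)%nat ->
  (forall e, In e spine_a -> W (fst e) = W (snd e)) ->
  forall y, (y < n)%nat -> W (vtx x (lrow x y)) = W (terminal_a x).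
Proof.
  intros Hx H. induction y as [|y IH]; intros Hy; [reflexivity|].
  rewrite <- IH by lia.
  assert (Hin : In (vtx x (lrow x y), vtx x (lrow x y + 1)) spine_a).
  { unfold spine_a. apply in_flat_map. exists x. split; [apply in_seq; lia|].
    apply in_map_iff. exists y. split; [reflexivity|]. apply in_seq; lia. }
  specialize (H _ Hin). simpl in H. rewrite H. f_equal. f_equal. unfold lrow. lia.
Qed.

Lemma spine_b_constant (W : nat -> bool) y : (y < n)%nat ->
  (forall e, In e spine_b -> W (fst e) = W (snd e)) ->
  forall x, (x < n)%nat -> W (vtx (lcol x y) y) = W (terminal_b y).
Proof.
  intros Hy H. induction x as [|x IH]; intros Hx; [reflexivity|].
  rewrite <- IH by lia.
  assert (Hin : In (vtx (lcol x y) y, vtx (lcol x y + 1) y) spine_b).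
  { unfold spine_b. apply in_flat_map. exists y. split; [apply in_seq; lia|].
    apply in_map_iff. exists x. split; [reflexivity|]. apply in_seq; lia. }
  specialize (H _ Hin). simpl in H. rewrite H. f_equal. f_equal. unfold lcol. lia.
Qed.

Lemma lpath_separated_cost (W : nat -> bool) x y : (x < n)%nat -> (y < n)%nat ->
  W (vtx x (lrow x y)) <> W (vtx (lcol x y) y) ->
  weight x y <= lsum (map (edge_cut_cost W) (lpath (x, y))).
Proof.
  intros Hx Hy Hends.
  assert (Hnn : forall e, In e (lpath (x, y)) -> 0 <= edge_cut_cost W e).
  { intros e He. apply edge_cut_cost_nonneg, (lpath_in_grid_edges (x, y)); [|assumption].
    apply in_pairs. simpl. lia. }
  set (walk_h := fun t => W (vtx (x + t) (lrow x y))).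
  set (walk_v := fun t => W (vtx (lcol x y) (y + t))).
  assert (Hcorner : walk_h (n + y * n)%nat = walk_v (n + x * n)%nat).
  { unfold walk_h, walk_v. f_equal. f_equal; unfold lrow, lcol; lia. }
  destruct (Bool.bool_dec (walk_h 0%nat) (walk_h (n + y * n)%nat)) as [Hsame|Hdiff].
  -
    assert (Hd : walk_v 0%nat <> walk_v (n + x * n)%nat).
    { rewrite <- Hcorner, <- Hsame. unfold walk_h, walk_v. rewrite !Nat.add_0_r. congruence. }
    destruct (switch_exists walk_v _ Hd) as [t [Ht Hsw]].
    set (e := (vtx (lcol x y) (y + t), vtx (lcol x y) (y + t + 1))).
    replace (weight x y) with (edge_cut_cost W e).
    + apply lsum_ge_term; [assumption|]. apply in_or_app. right. apply leg_v_in. assumption.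
    + unfold edge_cut_cost, e, walk_v in *. simpl fst; simpl snd.
      replace (y + S t)%nat with (y + t + 1)%nat in Hsw by lia.
      destruct (W (vtx (lcol x y) (y + t))), (W (vtx (lcol x y) (y + t + 1)));
        try contradiction; simpl; apply (cost_leg_v x y); try assumption; apply leg_v_in; assumption.
  -
    destruct (switch_exists walk_h _ Hdiff) as [t [Ht Hsw]].
    set (e := (vtx (x + t) (lrow x y), vtx (x + t + 1) (lrow x y))).
    replace (weight x y) with (edge_cut_cost W e).
    + apply lsum_ge_term; [assumption|]. apply in_or_app. left. apply leg_h_in. assumption.
    + unfold edge_cut_cost, e, walk_h in *. simpl fst; simpl snd.
      replace (x + S t)%nat with (x + t + 1)%nat in Hsw by lia.
      destruct (W (vtx (x + t) (lrow x y))), (W (vtx (x + t + 1) (lrow x y)));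
        try contradiction; simpl; apply (cost_leg_h x y); try assumption; apply leg_h_in; assumption.
Qed.

(* Lower bound: a cut putting [a_x] on the [W]-side iff [i <= x] and [b_y] iff
   [j <= y] costs at least [crossing_weight i j]: either it cuts a spine edge,
   of cost [heavy], or it cuts every L-path joining differently placed spines. *)
Lemma grid_cut_lower_bound i j (W : nat -> bool) :
  (forall x, (x < n)%nat -> W (terminal_a x) = Nat.leb i x) ->
  (forall y, (y < n)%nat -> W (terminal_b y) = Nat.leb j y) ->
  crossing_weight i j <= cut_cost grid_network W.
Proof.
  intros HA HB. rewrite cut_cost_grid.
  destruct (classic (exists e, In e (spine_a ++ spine_b) /\ W (fst e) <> W (snd e)))
    as [[e [He Hne]]|Hno].
  - assert (HeG : In e grid_edges)
      by (unfold grid_edges; rewrite app_assoc; apply in_or_app; left; assumption).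
    assert (Hc : edge_cut_cost W e = heavy).
    { unfold edge_cut_cost. apply in_app_or in He.
      destruct (W (fst e)), (W (snd e)); try contradiction; simpl;
        (destruct He; [apply cost_spine_a|apply cost_spine_b]; assumption). }
    pose proof (lsum_ge_term _ grid_edges e (edge_cut_cost_nonneg W) HeG).
    pose proof (crossing_weight_lt_heavy i j). lra.
  - assert (HsA : forall e, In e spine_a -> W (fst e) = W (snd e)).
    { intros e He. apply NNPP. intros Hne. apply Hno. exists e. split; [apply in_or_app; left|]; assumption. }
    assert (HsB : forall e, In e spine_b -> W (fst e) = W (snd e)).
    { intros e He. apply NNPP. intros Hne. apply Hno. exists e. split; [apply in_or_app; right|]; assumption. }
    unfold grid_edges. rewrite !lsum_map_app.
    pose proof (lsum_nonneg (edge_cut_cost W) spine_a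
      ltac:(intros; apply edge_cut_cost_nonneg; unfold grid_edges; apply in_or_app; auto)).
    pose proof (lsum_nonneg (edge_cut_cost W) spine_b
      ltac:(intros; apply edge_cut_cost_nonneg; unfold grid_edges; apply in_or_app; right;
            apply in_or_app; auto)).
    enough (crossing_weight i j <= lsum (map (edge_cut_cost W) (flat_map lpath pairs))) by lra.
    rewrite lsum_flat_map. unfold crossing_weight. apply lsum_le.
    intros [x y] Hp. pose proof Hp as Hxy. apply in_pairs in Hxy. simpl in Hxy. simpl fst; simpl snd.
    destruct (Bool.eqb (Nat.leb i x) (Nat.leb j y)) eqn:Eb.
    + apply lsum_nonneg. intros e He. apply edge_cut_cost_nonneg, (lpath_in_grid_edges (x, y)); assumption.
    + apply lpath_separated_cost; try tauto.
      rewrite (spine_a_constant W x), (spine_b_constant W y), HA, HB by tauto.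
      intros E. rewrite E, Bool.eqb_reflx in Eb. discriminate.
Qed.

Lemma standard_cut_vtx i j c r : (r < side)%nat ->
  standard_cut i j (vtx c r) = (Nat.leb (n + i * n) r || Nat.leb (n + j * n) c)%bool.
Proof. intros H. unfold standard_cut. rewrite vtx_div, vtx_mod by assumption. reflexivity. Qed.

Lemma leb_lrow i x y : (y < n)%nat -> Nat.leb (n + i * n) (lrow x y) = Nat.leb i x.
Proof.
  intros H. unfold lrow.
  destruct (Nat.leb_spec i x), (Nat.leb_spec (n + i * n) (n + x * n + y)); auto; nia.
Qed.

Lemma leb_lcol j x y : (x < n)%nat -> Nat.leb (n + j * n) (lcol x y) = Nat.leb j y.
Proof.
  intros H. unfold lcol.
  destruct (Nat.leb_spec j y), (Nat.leb_spec (n + j * n) (n + y * n + x)); auto; nia.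
Qed.

Lemma leb_small a x : (x < n)%nat -> Nat.leb (n + a * n) x = false.
Proof. intros. apply Nat.leb_gt. lia. Qed.

Lemma standard_cut_spines i j e :
  In e (spine_a ++ spine_b) -> edge_cut_cost (standard_cut i j) e = 0.
Proof.
  pose proof side_ge. intros He. unfold edge_cut_cost. apply in_app_or in He. destruct He as [He|He].
  - destruct (in_spine_a e He) as [x [y [[Hx Hy] ->]]]. simpl fst; simpl snd.
    replace (lrow x y + 1)%nat with (lrow x (y + 1)) by (unfold lrow; lia).
    rewrite !standard_cut_vtx by (apply lrow_lt; lia).
    rewrite !leb_lrow, leb_small, Bool.eqb_reflx by lia. reflexivity.
  - destruct (in_spine_b e He) as [x [y [[Hy Hx] ->]]]. simpl fst; simpl snd.
    replace (lcol x y + 1)%nat with (lcol (x + 1) y) by (unfold lcol; lia).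
    rewrite !standard_cut_vtx by (unfold side; nia).
    rewrite !leb_lcol, leb_small, Bool.eqb_reflx by lia. reflexivity.
Qed.

(* Along each leg of an L-path the standard cut switches at most once, so the
   L-path contributes its weight exactly when its ends are separated. *)
Lemma standard_cut_lpath i j x y : (x < n)%nat -> (y < n)%nat ->
  lsum (map (edge_cut_cost (standard_cut i j)) (lpath (x, y))) =
  if Bool.eqb (Nat.leb i x) (Nat.leb j y) then 0 else weight x y.
Proof.
  intros Hx Hy. pose proof side_ge. unfold lpath. simpl fst; simpl snd. rewrite lsum_map_app.
  assert (HR : (lrow x y < side)%nat) by (apply lrow_lt; assumption).
  assert (HC : (lcol x y < side)%nat) by (apply lcol_lt; assumption).
  set (walk_h := fun t => standard_cut i j (vtx (x + t) (lrow x y))).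
  set (walk_v := fun t => standard_cut i j (vtx (lcol x y) (y + t))).
  assert (H1 : lsum (map (edge_cut_cost (standard_cut i j)) (leg_h x y)) =
     lsum (map (fun t => if Bool.eqb (walk_h t) (walk_h (S t)) then 0 else weight x y)
                (seq 0 (n + y * n)))).
  { unfold leg_h. rewrite map_map. apply lsum_ext. intros t Ht. apply in_seq in Ht.
    unfold edge_cut_cost, walk_h. simpl fst; simpl snd.
    replace (x + S t)%nat with (x + t + 1)%nat by lia.
    rewrite (cost_leg_h x y) by (try apply leg_h_in; lia). reflexivity. }
  assert (H2 : lsum (map (edge_cut_cost (standard_cut i j)) (leg_v x y)) =
     lsum (map (fun t => if Bool.eqb (walk_v t) (walk_v (S t)) then 0 else weight x y)
                (seq 0 (n + x * n)))).
  { unfold leg_v. rewrite map_map. apply lsum_ext. intros t Ht. apply in_seq in Ht.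
    unfold edge_cut_cost, walk_v. simpl fst; simpl snd.
    replace (y + S t)%nat with (y + t + 1)%nat by lia.
    rewrite (cost_leg_v x y) by (try apply leg_v_in; lia). reflexivity. }
  rewrite H1, H2, !lsum_switch.
  - unfold walk_h, walk_v. rewrite !Nat.add_0_r.
    replace (x + (n + y * n))%nat with (lcol x y) by (unfold lcol; lia).
    replace (y + (n + x * n))%nat with (lrow x y) by (unfold lrow; lia).
    rewrite !standard_cut_vtx by (try assumption; unfold side; nia).
    rewrite leb_lrow, (leb_small j x), (leb_small i y), leb_lcol by assumption.
    destruct (Nat.leb i x), (Nat.leb j y); simpl; lra.
  - intros t Ht Hb. unfold walk_v in *. rewrite standard_cut_vtx in * by (unfold side; nia).
    apply Bool.orb_true_iff in Hb. apply Bool.orb_true_iff.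
    destruct Hb as [Hb|Hb]; [left|right; assumption].
    apply Nat.leb_le in Hb. apply Nat.leb_le. lia.
  - intros t Ht Hb. unfold walk_h in *. rewrite standard_cut_vtx in * by assumption.
    apply Bool.orb_true_iff in Hb. apply Bool.orb_true_iff.
    destruct Hb as [Hb|Hb]; [left; assumption|right].
    apply Nat.leb_le in Hb. apply Nat.leb_le. lia.
Qed.

Lemma standard_cut_cost i j : cut_cost grid_network (standard_cut i j) = crossing_weight i j.
Proof.
  rewrite cut_cost_grid. unfold grid_edges. rewrite !lsum_map_app.
  rewrite (lsum_ext _ (fun _ => 0) spine_a), (lsum_ext _ (fun _ => 0) spine_b), !lsum_zero
    by (intros; apply standard_cut_spines, in_or_app; auto).
  rewrite lsum_flat_map. unfold crossing_weight.
  rewrite (lsum_ext _ (fun p => if Bool.eqb (Nat.leb i (fst p)) (Nat.leb j (snd p))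
                               then 0 else weight (fst p) (snd p)) pairs); [lra|].
  intros [x y] Hp. apply in_pairs in Hp. apply standard_cut_lpath; apply Hp.
Qed.

(* Terminal number [t]: [a_t] for [t < n], [b_(t-n)] for [n <= t < 2n], and the
   isolated vertex [0] for [t = 2n] (used only when the number of terminals is odd). *)
Definition terminal (t : nat) : nat :=
  if Nat.ltb t n then terminal_a t
  else if Nat.ltb t (n + n) then terminal_b (t - n) else 0%nat.

Definition terminal_side (i j t : nat) : bool :=
  if Nat.ltb t n then Nat.leb i t
  else if Nat.ltb t (n + n) then Nat.leb j (t - n) else false.

(* Recovers [t] from [terminal t]: [a_x] lies in a row [>= n], [b_y] in a column [>= n]. *)
Definition terminal_index (u : nat) : nat :=
  if Nat.leb n (u mod side) then (u / side)%nat
  else if Nat.leb n (u / side) then (n + u mod side)%nat else (n + n)%nat.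

Lemma terminal_index_spec t : (t <= n + n)%nat -> terminal_index (terminal t) = t.
Proof.
  intros Ht. pose proof side_ge. unfold terminal_index, terminal, terminal_a, terminal_b.
  destruct (Nat.ltb_spec t n); [|destruct (Nat.ltb_spec t (n + n))].
  - rewrite vtx_div, vtx_mod by (apply lrow_lt; lia).
    replace (Nat.leb n (lrow t 0)) with true by (symmetry; apply Nat.leb_le; unfold lrow; lia).
    reflexivity.
  - rewrite vtx_div, vtx_mod by (unfold side; nia).
    replace (Nat.leb n (t - n)) with false by (symmetry; apply Nat.leb_gt; lia).
    replace (Nat.leb n (lcol 0 (t - n))) with true by (symmetry; apply Nat.leb_le; unfold lcol; nia).
    lia.
  - rewrite Nat.Div0.mod_0_l, Nat.Div0.div_0_l.
    replace (Nat.leb n 0) with false by (symmetry; apply Nat.leb_gt; lia). lia.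
Qed.

Lemma terminal_lt t : (t <= n + n)%nat -> (terminal t < side * side)%nat.
Proof.
  intros Ht. pose proof side_ge. unfold terminal, terminal_a, terminal_b.
  destruct (Nat.ltb_spec t n); [|destruct (Nat.ltb_spec t (n + n))].
  - pose proof (lrow_lt t 0 ltac:(lia) ltac:(lia)).
    assert (t + 1 <= side)%nat by nia. unfold vtx. nia.
  - pose proof (lcol_lt 0 (t - n) ltac:(lia) ltac:(lia)).
    assert (lcol 0 (t - n) + 1 <= side)%nat by lia. unfold vtx. nia.
  - nia.
Qed.

Lemma standard_cut_terminal i j t : (t <= n + n)%nat ->
  standard_cut i j (terminal t) = terminal_side i j t.
Proof.
  intros Ht. pose proof side_ge. unfold terminal, terminal_side, terminal_a, terminal_b.
  destruct (Nat.ltb_spec t n); [|destruct (Nat.ltb_spec t (n + n))].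
  - rewrite standard_cut_vtx by (apply lrow_lt; lia).
    rewrite leb_lrow, leb_small by lia. apply Bool.orb_false_r.
  - rewrite standard_cut_vtx by (unfold side; nia).
    rewrite leb_small, leb_lcol by lia. reflexivity.
  - unfold standard_cut. rewrite Nat.Div0.mod_0_l, Nat.Div0.div_0_l, !leb_small by lia.
    reflexivity.
Qed.

Lemma terminal_cut_lower_bound i j (W : nat -> bool) :
  (forall t, (t < n + n)%nat -> W (terminal t) = terminal_side i j t) ->
  crossing_weight i j <= cut_cost grid_network W.
Proof.
  intros HW. apply grid_cut_lower_bound.
  - intros x Hx. specialize (HW x ltac:(lia)).
    unfold terminal, terminal_side in HW. rewrite (proj2 (Nat.ltb_lt x n)) in HW by assumption.
    assumption.
  - intros y Hy. specialize (HW (n + y)%nat ltac:(lia)).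
    unfold terminal, terminal_side in HW.
    rewrite (proj2 (Nat.ltb_ge (n + y) n)), (proj2 (Nat.ltb_lt (n + y) (n + n))) in HW by lia.
    replace (n + y - n)%nat with y in HW by lia. assumption.
Qed.

Section Terminals.
Variable extra : bool.

Definition grid_terminals : list nat :=
  map terminal (seq 0 (n + n + (if extra then 1 else 0))).

Lemma grid_terminals_length : length grid_terminals = (n + n + (if extra then 1 else 0))%nat.
Proof. unfold grid_terminals. rewrite length_map, length_seq. reflexivity. Qed.

Lemma nth_grid_terminals t : (t < length grid_terminals)%nat ->
  nth t grid_terminals 0%nat = terminal t /\ (t <= n + n)%nat.
Proof.
  rewrite grid_terminals_length. intros Ht. split; [|destruct extra; lia].
  unfold grid_terminals. rewrite (nth_indep _ 0%nat (terminal 0)) by (rewrite length_map, length_seq; lia).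
  rewrite map_nth, seq_nth by lia. reflexivity.
Qed.

Lemma grid_terminals_ok : terminals_ok grid_network grid_terminals (length grid_terminals).
Proof.
  split; [reflexivity|split].
  - apply NoDup_nth with (d := 0%nat). intros t1 t2 H1 H2 E.
    destruct (nth_grid_terminals t1 H1) as [E1 B1], (nth_grid_terminals t2 H2) as [E2 B2].
    rewrite <- (terminal_index_spec t1 B1), <- (terminal_index_spec t2 B2), <- E1, <- E2, E.
    reflexivity.
  - apply Forall_forall. intros q Hq. apply (In_nth _ _ 0%nat) in Hq. destruct Hq as [t [Ht <-]].
    destruct (nth_grid_terminals t Ht) as [-> Bt]. apply terminal_lt. assumption.
Qed.

Lemma grid_mincut i j :
  is_mincut grid_network grid_terminals (terminal_side i j) (crossing_weight i j).
Proof.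
  split.
  - exists (standard_cut i j). split; [|apply standard_cut_cost].
    left. intros t Ht. destruct (nth_grid_terminals t Ht) as [-> Bt].
    apply standard_cut_terminal. assumption.
  - intros W [Hs|Hs]; [|rewrite <- cut_cost_negb]; apply terminal_cut_lower_bound;
      intros t Ht; destruct (nth_grid_terminals t ltac:(rewrite grid_terminals_length; lia)) as [E _];
      rewrite <- E, Hs by (rewrite grid_terminals_length; lia);
      [reflexivity | apply Bool.negb_involutive].
Qed.
End Terminals.

(* Mixed second difference: only the L-path [(i, j)] changes status in all four
   cuts, so [S_ij - S_(i+1)j - S_i(j+1) + S_(i+1)(j+1)] isolates [-2 weight i j]. *)
Lemma crossing_weight_second_difference i j : (i < n)%nat -> (j < n)%nat ->
  crossing_weight i j - crossing_weight (S i) j - crossing_weight i (S j)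
  + crossing_weight (S i) (S j) = -2 * weight i j.
Proof.
  intros Hi Hj. unfold crossing_weight.
  set (F := fun a c (p : nat * nat) => if Bool.eqb (Nat.leb a (fst p)) (Nat.leb c (snd p))
                                       then 0 else weight (fst p) (snd p)).
  change (lsum (map (F i j) pairs) - lsum (map (F (S i) j) pairs) - lsum (map (F i (S j)) pairs)
          + lsum (map (F (S i) (S j)) pairs) = -2 * weight i j).
  replace (lsum (map (F i j) pairs) - lsum (map (F (S i) j) pairs) - lsum (map (F i (S j)) pairs)
           + lsum (map (F (S i) (S j)) pairs))
    with (lsum (map (fun p => F i j p + (-1) * F (S i) j p
                              + ((-1) * F i (S j) p + F (S i) (S j) p)) pairs))
    by (rewrite !lsum_plus, !lsum_scal; ring).
  rewrite (lsum_ext _ (fun p => if Nat.eqb (fst p) i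
                                then (if Nat.eqb (snd p) j then -2 * weight i j else 0) else 0)).
  - unfold pairs. rewrite lsum_flat_map.
    rewrite (lsum_ext _ (fun x => if Nat.eqb x i then -2 * weight i j else 0));
      [apply lsum_indicator; assumption|].
    intros x _. rewrite map_map. simpl fst; simpl snd. destruct (Nat.eqb x i).
    + apply lsum_indicator. assumption.
    + apply lsum_zero.
  - intros [x y] _. unfold F. simpl fst; simpl snd.
    destruct (Nat.leb_spec i x), (Nat.leb_spec (S i) x), (Nat.leb_spec j y), (Nat.leb_spec (S j) y);
      simpl; destruct (Nat.eqb_spec x i), (Nat.eqb_spec y j); try lia; subst; lra.
Qed.
End GridNetwork.

Definition z_combination (m : nat) (c : nat -> R) (v : R) : Prop :=
  exists a : nat -> Z, v = isum m (fun e => IZR (a e) * c e).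

Lemma z_combination_add m c v w :
  z_combination m c v -> z_combination m c w -> z_combination m c (v + w).
Proof.
  intros [a ->] [b ->]. exists (fun e => (a e + b e)%Z). rewrite <- isum_plus.
  apply isum_ext. intros e _. rewrite plus_IZR. ring.
Qed.

Lemma z_combination_sub m c v w :
  z_combination m c v -> z_combination m c w -> z_combination m c (v - w).
Proof.
  intros [a ->] [b ->]. exists (fun e => (a e - b e)%Z).
  rewrite <- (Rmult_1_l (isum m (fun e => IZR (b e) * c e))).
  unfold Rminus. rewrite Ropp_mult_distr_l, <- isum_scal, <- isum_plus.
  apply isum_ext. intros e _. rewrite minus_IZR. ring.
Qed.

Lemma finite_choice {B : Type} (b0 : B) (P : nat -> B -> Prop) d :
  (forall t, (t < d)%nat -> exists b, P t b) -> exists f : nat -> B, forall t, (t < d)%nat -> P t (f t).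
Proof.
  induction d as [|d IH]; intros H; [exists (fun _ => b0); intros; lia|].
  destruct IH as [f Hf]; [intros t Ht; apply H; lia|].
  destruct (H d ltac:(lia)) as [b Hb].
  exists (fun t => if Nat.eqb t d then b else f t). intros t Ht.
  destruct (Nat.eqb_spec t d) as [->|]; [assumption|]. apply Hf. lia.
Qed.

Lemma z_independent_scale d c v : c <> 0 -> z_independent d v -> z_independent d (fun t => c * v t).
Proof.
  intros Hc Hv lam Hl. apply Hv.
  rewrite (isum_ext _ _ (fun t => c * (IZR (lam t) * v t))), isum_scal in Hl by (intros; ring).
  apply Rmult_integral in Hl. destruct Hl; [contradiction|assumption].
Qed.

Lemma z_independent_ext d u v :
  (forall t, (t < d)%nat -> u t = v t) -> z_independent d u -> z_independent d v.
Proof.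
  intros E Hu lam Hl. apply Hu. rewrite <- Hl. apply isum_ext. intros t Ht. rewrite E by assumption.
  reflexivity.
Qed.

Definition edge_cost (N : network) (e : nat) : R := cost N (nth e (edges N) (0%nat, 0%nat)).

Lemma cut_cost_combination N W : z_combination (length (edges N)) (edge_cost N) (cut_cost N W).
Proof.
  exists (fun e => let uv := nth e (edges N) (0%nat, 0%nat) in
              if Bool.eqb (W (fst uv)) (W (snd uv)) then 0%Z else 1%Z).
  unfold cut_cost. change (fold_right Rplus 0) with lsum. rewrite (lsum_nth _ _ (0%nat, 0%nat)).
  apply isum_ext. intros e _. unfold edge_cost. destruct (Bool.eqb _ _); simpl; ring.
Qed.

Lemma mincut_combination N N' Q S v : mimicking N' N Q -> proper_subset (length Q) S ->
  is_mincut N Q S v -> z_combination (length (edges N')) (edge_cost N') v.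
Proof.
  intros [_ [_ Hmim]] HS Hv. destruct (proj1 (Hmim S HS v) Hv) as [[W [_ <-]] _].
  apply cut_cost_combination.
Qed.

(* The [(n-2)^2] second differences of the minimum cuts
   [S_ij] ([1 <= i <= n-2], [j <= n-3]) are [-2] times logarithms of distinct
   primes, hence independent, and they are integer combinations of the edge
   costs of the mimicking network. *)
Lemma mimicking_grid_edges n extra N' : (3 <= n)%nat ->
  mimicking N' (grid_network n) (grid_terminals n extra) ->
  ((n - 2) * (n - 2) <= length (edges N'))%nat.
Proof.
  intros Hn Hmim.
  set (m := length (edges N')).
  assert (Hcut : forall i j, (1 <= i <= n - 1)%nat ->
            z_combination m (edge_cost N') (crossing_weight n i j)).
  { intros i j Hi. apply (mincut_combination _ _ _ (terminal_side n i j) _ Hmim).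
    - rewrite grid_terminals_length. split; [exists (n - 1)%nat | exists 0%nat]; split; try lia;
        unfold terminal_side; rewrite (proj2 (Nat.ltb_lt _ n)) by lia;
        [apply Nat.leb_le | apply Nat.leb_gt]; lia.
    - apply grid_mincut. lia. }
  set (d := ((n - 2) * (n - 2))%nat).
  set (ii := fun t => (1 + t / (n - 2))%nat). set (jj := fun t => (t mod (n - 2))%nat).
  assert (Hij : forall t, (t < d)%nat -> (1 <= ii t <= n - 2 /\ jj t <= n - 3)%nat).
  { intros t Ht. unfold ii, jj, d in *. pose proof (Nat.mod_upper_bound t (n - 2) ltac:(lia)).
    assert (t / (n - 2) < n - 2)%nat by (apply Nat.Div0.div_lt_upper_bound; lia). lia. }
  set (u := fun t => crossing_weight n (ii t) (jj t) - crossing_weight n (S (ii t)) (jj t)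
                     - crossing_weight n (ii t) (S (jj t)) + crossing_weight n (S (ii t)) (S (jj t))).
  destruct (finite_choice (fun _ => 0%Z)
              (fun t a => u t = isum m (fun e => IZR (a e) * edge_cost N' e)) d) as [A HA].
  { intros t Ht. destruct (Hij t Ht) as [[H1 H2] _].
    apply z_combination_add; [apply z_combination_sub; [apply z_combination_sub|]|];
      apply Hcut; lia. }
  apply (independent_combinations_le m (edge_cost N') d u A HA).
  apply (z_independent_ext d (fun t => -2 * ln (IZR (prime_seq (ii t * n + jj t))))).
  { intros t Ht. destruct (Hij t Ht) as [[H1 H2] H3]. unfold u.
    rewrite crossing_weight_second_difference by lia. reflexivity. }
  apply z_independent_scale; [lra|].
  apply (ln_primes_independent (fun t => prime_seq (ii t * n + jj t))); [intros; apply prime_seq_prime|].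
  intros t1 t2 H1 H2 E. apply prime_seq_inj in E.
  destruct (Hij t1 H1) as [_ g1], (Hij t2 H2) as [_ g2].
  destruct (divmod_n n ltac:(lia) (ii t1) (jj t1) ltac:(lia)) as [a1 b1].
  destruct (divmod_n n ltac:(lia) (ii t2) (jj t2) ltac:(lia)) as [a2 b2].
  rewrite E in a1, b1. rewrite a1 in a2. rewrite b1 in b2. unfold ii, jj in a2, b2.
  rewrite (Nat.div_mod t1 (n - 2)), (Nat.div_mod t2 (n - 2)) by lia. lia.
Qed.

Lemma square_bound k n : (k <= n + n + 1)%nat -> (3 <= n)%nat ->
  1 / 100 * INR k ^ 2 <= INR ((n - 2) * (n - 2)).
Proof.
  intros Hk Hn.
  assert (H : (k * k <= 100 * ((n - 2) * (n - 2)))%nat).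
  { assert (k * k <= (2 * (n - 2) + 5) * (2 * (n - 2) + 5))%nat by (apply Nat.mul_le_mono; lia).
    nia. }
  apply le_INR in H. rewrite !mult_INR in H. rewrite mult_INR. simpl pow.
  replace (INR 100) with 100 in H by (rewrite INR_IZR_INZ; reflexivity). lra.
Qed.

Theorem theorem1p3 :
  exists beta : R, 0 < beta /\
    forall k : nat, (5 < k)%nat ->
      exists (G : network) (Q : list nat),
        wf_network G /\ terminals_ok G Q k /\ planar G /\
        forall G' : network, mimicking G' G Q ->
          beta * (INR k) ^ 2 <= INR (length (edges G')).
Proof.
  exists (1 / 100). split; [lra|]. intros k Hk.
  set (n := (k / 2)%nat). set (extra := Nat.eqb (k mod 2) 1).
  assert (Hkn : k = (n + n + (if extra then 1 else 0))%nat).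
  { unfold n, extra. pose proof (Nat.div_mod k 2 ltac:(lia)).
    pose proof (Nat.mod_upper_bound k 2 ltac:(lia)).
    destruct (Nat.eqb_spec (k mod 2) 1); lia. }
  assert (Hn : (3 <= n)%nat) by (destruct extra; lia).
  assert (HQ : length (grid_terminals n extra) = k) by (rewrite grid_terminals_length; lia).
  exists (grid_network n), (grid_terminals n extra).
  split; [apply grid_network_wf; lia|].
  split; [rewrite <- HQ; apply grid_terminals_ok; lia|].
  split; [apply grid_network_planar; lia|].
  intros G' Hmim. apply Rle_trans with (INR ((n - 2) * (n - 2))).
  - apply square_bound; [destruct extra; lia | assumption].
  - apply le_INR, (mimicking_grid_edges n extra); assumption.
Qed.
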